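(* Let $n,M\ge1$ be integers, $\mathcal X=\{x^{(1)},\dots,x^{(L)}\}\subset\mathbb C$ a set of $L$ channel input symbols, $\sigma^2>0$, $g:\mathbb C\to[0,+\infty]$ measurable, $\epsilon>0$, $B,\delta\in\mathbb R$. Let $\mathscr C$ be a homogeneous $(n,M,\epsilon,B,\delta)$-code (as defined in the context), let $p_\ell=\int_{\mathcal E_\ell}f_{Y|X}(y|x^{(\ell)})dy$, assume $\sum_jp_j>0$, let $Q(x^{(\ell)})=p_\ell/\sum_{j=1}^Lp_j$, and assume $P_{\mathscr C}=Q$. Then $$\epsilon\ge1-\exp\Big(-nH(Q)+n\log\sum_{j=1}^Lp_j\Big).$$
   Context: Channel: outputs $\boldsymbol Y=\boldsymbol x+\boldsymbol N_1$, $\boldsymbol Z=\boldsymbol x+\boldsymbol N_2$, all noise components i.i.d. complex circularly symmetric Gaussian with real and imaginary parts of zero mean and variance $\sigma^2/2$; $f_{Y|X}(y|x)=\frac1{\pi\sigma^2}\exp(-|y-x|^2/\sigma^2)$, $f_{\boldsymbol Y|\boldsymbol X}(\boldsymbol y|\boldsymbol x)=\prod_tf_{Y|X}(y_t|x_t)$ (same for $\boldsymbol Z$). An $(n,M)$-code is $\mathscr C=\{(\boldsymbol u(i),\mathcal D_i)\}_{i=1}^M$ with $\boldsymbol u(i)\in\mathcal X^n$, $|u_t(i)|\le P$ for a fixed $P>0$, pairwise disjoint measurable $\mathcal D_i\subseteq\mathbb C^n$, $M\le2^{n\lfloor\log_2L\rfloor}$; decoding sets are of product form $\mathcal D_i=\mathcal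 D_{i,1}\times\cdots\times\mathcal D_{i,n}$, $\mathcal D_{i,t}\subseteq\mathbb C$ measurable. $\gamma_i(\mathscr C)=1-\int_{\mathcal D_i}f_{\boldsymbol Y|\boldsymbol X}(\boldsymbol y|\boldsymbol u(i))d\boldsymbol y$, $\gamma=\frac1M\sum_i\gamma_i$; $(n,M,\epsilon)$-code: $\gamma<\epsilon$. With $\bar g(\boldsymbol z)=\frac1n\sum_tg(z_t)$, $\theta_i=\Pr[\bar g(\boldsymbol Z)<B\mid\boldsymbol X=\boldsymbol u(i)]$, $\theta=\frac1M\sum_i\theta_i$; $(n,M,\epsilon,B,\delta)$-code: $(n,M,\epsilon)$-code with $\theta<\delta$. Types: $P_{\boldsymbol u(i)}(x^{(\ell)})=\frac1n\#\{t:u_t(i)=x^{(\ell)}\}$, $P_{\mathscr C}=\frac1M\sum_iP_{\boldsymbol u(i)}$. For each $\ell$, $\mathcal E_\ell=\mathcal D_{i^\star,t^\star}$ where $(i^\star,t^\star)$ minimizes $\int_{\mathcal D_{i,t}}f_{Y|X}(y|x^{(\ell)})dy$ over $\{1,\dots,M\}\times\{1,\dots,n\}$. The code is homogeneous if $P_{\boldsymbol u(i)}=P_{\mathscr C}$ for every $i$, and $\mathcal D_{i,t}=\mathcal E_\ell$ whenever $u_t(i)=x^{(\ell)}$. $H$ denotes entropy with natural logarithm. *)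

From HB Require Import structures.
From mathcomp Require Import all_boot all_order all_algebra.
From mathcomp Require Import all_classical all_reals all_analysis.
From mathcomp Require Import measurable_realfun.
Set Implicit Arguments. Unset Strict Implicit. Unset Printing Implicit Defensive.
Import Order.TTheory GRing.Theory Num.Theory.
Local Open Scope classical_set_scope.
Local Open Scope ring_scope.

Notation cplx R := (R * R)%type.
Section Channel.
Variable R : realType.

(* The complex plane C is modelled as R * R (real part, imaginary part),
   carrying the product Borel sigma-algebra and the Lebesgue measure
   lebesgue_measure \x lebesgue_measure. *)

Definition cnorm2 (z : (cplx R)) : R := z.1 ^+ 2 + z.2 ^+ 2.
Definition cdiff (y x : (cplx R)) : (cplx R) := (y.1 - x.1, y.2 - x.2).

Definition muC : set (cplx R) -> \bar R :=
  ((@lebesgue_measure R) \x (@lebesgue_measure R))%E.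

Definition fYX (s2 : R) (y x : (cplx R)) : R :=
  (pi * s2)^-1 * expR (- cnorm2 (cdiff y x) / s2).

(* vectors of C^n are represented by functions nat -> (cplx R) (coordinates
   0..n-1 are used); vcons y z = (y, z_0, z_1, ...) *)
Definition vcons (y : (cplx R)) (z : nat -> (cplx R)) : nat -> (cplx R) :=
  fun k => if k is k'.+1 then z k' else y.

(* Lebesgue integral over C^n of a nonnegative function, written as the
   iterated integral over the coordinates (Tonelli). *)
Fixpoint intCn (n : nat) (F : (nat -> (cplx R)) -> \bar R) : \bar R :=
  match n with
  | 0 => F (fun _ => (0, 0))
  | n'.+1 => (\int[muC]_y intCn n' (fun z => F (vcons y z)))%E
  end.

Definition fYXn (s2 : R) (n : nat) (x : 'I_n -> (cplx R)) (y : nat -> (cplx R)) : R :=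
  \prod_(t < n) fYX s2 (y t) (x t).

Definition probn (s2 : R) (n : nat) (x : 'I_n -> (cplx R)) (A : set (nat -> (cplx R))) : R :=
  fine (intCn n (fun y => ((\1_A y : R) * fYXn s2 x y)%:E)).

(* A code: M codewords of length n, symbol indices u i t in 'I_L, i.e.
   u_t(i) = xs (u i t);  decoding sets D_i = D i 0 x ... x D i (n-1). *)
Definition dec_set (n M : nat) (D : 'I_M -> 'I_n -> set (cplx R)) (i : 'I_M)
  : set (nat -> (cplx R)) := [set y | forall t : 'I_n, D i t (y t)].

Definition codeword (L n M : nat) (xs : 'I_L -> (cplx R)) (u : 'I_M -> 'I_n -> 'I_L)
  (i : 'I_M) : 'I_n -> (cplx R) := fun t => xs (u i t).

Definition gamma_i (L n M : nat) (s2 : R) (xs : 'I_L -> (cplx R))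
  (u : 'I_M -> 'I_n -> 'I_L) (D : 'I_M -> 'I_n -> set (cplx R)) (i : 'I_M) : R :=
  1 - probn s2 (codeword xs u i) (dec_set D i).

Definition gamma (L n M : nat) (s2 : R) (xs : 'I_L -> (cplx R))
  (u : 'I_M -> 'I_n -> 'I_L) (D : 'I_M -> 'I_n -> set (cplx R)) : R :=
  M%:R^-1 * \sum_(i < M) gamma_i s2 xs u D i.

Definition gbar (n : nat) (g : (cplx R) -> \bar R) (z : nat -> (cplx R)) : \bar R :=
  ((n%:R^-1)%:E * \sum_(t < n) g (z t))%E.

Definition theta_i (L n M : nat) (s2 : R) (xs : 'I_L -> (cplx R))
  (u : 'I_M -> 'I_n -> 'I_L) (g : (cplx R) -> \bar R) (B : R) (i : 'I_M) : R :=
  probn s2 (codeword xs u i) [set z | (gbar n g z < B%:E)%E].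

Definition theta (L n M : nat) (s2 : R) (xs : 'I_L -> (cplx R))
  (u : 'I_M -> 'I_n -> 'I_L) (g : (cplx R) -> \bar R) (B : R) : R :=
  M%:R^-1 * \sum_(i < M) theta_i s2 xs u g B i.

Definition is_code (L n M : nat) (P : R) (xs : 'I_L -> (cplx R))
  (u : 'I_M -> 'I_n -> 'I_L) (D : 'I_M -> 'I_n -> set (cplx R)) : Prop :=
  [/\ forall i t, Num.sqrt (cnorm2 (xs (u i t))) <= P,
      forall i t, measurable (D i t),
      forall i j : 'I_M, i != j -> dec_set D i `&` dec_set D j = set0
    & (M <= 2 ^ (n * trunc_log 2 L))%N].

Definition is_code_eps (L n M : nat) (P s2 eps : R) (xs : 'I_L -> (cplx R))
  (u : 'I_M -> 'I_n -> 'I_L) (D : 'I_M -> 'I_n -> set (cplx R)) : Prop :=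
  is_code P xs u D /\ gamma s2 xs u D < eps.

Definition is_code_eps_B_delta (L n M : nat) (P s2 eps : R) (g : (cplx R) -> \bar R)
  (B delta : R) (xs : 'I_L -> (cplx R))
  (u : 'I_M -> 'I_n -> 'I_L) (D : 'I_M -> 'I_n -> set (cplx R)) : Prop :=
  is_code_eps P s2 eps xs u D /\ theta s2 xs u g B < delta.

Definition ctype (L n M : nat) (u : 'I_M -> 'I_n -> 'I_L) (i : 'I_M) (l : 'I_L) : R :=
  #|[pred t : 'I_n | u i t == l]|%:R / n%:R.

Definition code_type (L n M : nat) (u : 'I_M -> 'I_n -> 'I_L) (l : 'I_L) : R :=
  M%:R^-1 * \sum_(i < M) ctype u i l.

Definition intC (s2 : R) (A : set (cplx R)) (x : (cplx R)) : \bar R :=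
  (\int[muC]_(y in A) (fYX s2 y x)%:E)%E.

Definition E_spec (L n M : nat) (s2 : R) (xs : 'I_L -> (cplx R))
  (D : 'I_M -> 'I_n -> set (cplx R)) (E : 'I_L -> set (cplx R)) : Prop :=
  forall l : 'I_L, exists (i0 : 'I_M) (t0 : 'I_n),
    E l = D i0 t0 /\
    forall (i : 'I_M) (t : 'I_n), (intC s2 (D i0 t0) (xs l) <= intC s2 (D i t) (xs l))%E.

Definition homogeneous (L n M : nat) (u : 'I_M -> 'I_n -> 'I_L)
  (D : 'I_M -> 'I_n -> set (cplx R)) (E : 'I_L -> set (cplx R)) : Prop :=
  (forall i l, ctype u i l = code_type u l) /\
  (forall i t, D i t = E (u i t)).

Definition entropy (L : nat) (Q : 'I_L -> R) : R :=
  - \sum_(l < L) (if Q l == 0 then 0 else Q l * ln (Q l)).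

End Channel.

From HB Require Import structures.
From mathcomp Require Import all_boot all_order all_algebra.
From mathcomp Require Import all_classical all_reals all_analysis.
From mathcomp Require Import measurable_realfun.
Set Implicit Arguments. Unset Strict Implicit. Unset Printing Implicit Defensive.
Import Order.TTheory GRing.Theory Num.Theory.
Local Open Scope classical_set_scope.
Local Open Scope ring_scope.

(* Since the decoding sets are boxes and the noise is memoryless, Tonelli
   factorises the probability of correct decoding of codeword i into
   \prod_t \int_{D_{i,t}} f(y | u_t(i)) dy.  By homogeneity D_{i,t} = E_l
   whenever u_t(i) = x^(l), and x^(l) occurs n Q(x^(l)) times in every
   codeword, so this product is \prod_l p_l^(n Q_l) = \prod_l (S Q_l)^(n Q_l)
   = exp(-n H(Q) + n log S).  Averaging 1 - (that bound) over the codewords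
   bounds gamma, hence eps, from below. *)

Section ComplexPlaneMeasure.
Variable R : realType.

Let lebesgue2 := ((@lebesgue_measure R) \x (@lebesgue_measure R))%E.

HB.instance Definition _ := isMeasure.Build _ (cplx R) R (@muC R)
  (measure0 lebesgue2) (measure_ge0 lebesgue2)
  (@measure_semi_sigma_additive _ _ _ lebesgue2).

End ComplexPlaneMeasure.

Section FineProduct.
Variable R : realType.
Local Open Scope ereal_scope.

(* [fine] sends infinite values to 0, so only an inequality survives. *)
Lemma fineM_le (a b : \bar R) : 0 <= a -> 0 <= b ->
  (fine (a * b) <= fine a * fine b)%R.
Proof.
case: a => [a| |] //; case: b => [b| |] // a0 b0.
- have [->|a_neq0] := eqVneq a 0%R; first by rewrite mul0e /= mul0r.
  by rewrite gt0_muley /= ?mulr0 // lte_fin lt_def a_neq0 -lee_fin.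
- have [->|b_neq0] := eqVneq b 0%R; first by rewrite mule0 /= mulr0.
  by rewrite gt0_mulye /= ?mul0r // lte_fin lt_def b_neq0 -lee_fin.
- by rewrite mulyy /= mul0r.
Qed.

Lemma fine_prod_le (I : Type) (r : seq I) (e : I -> \bar R) :
  (forall i, 0 <= e i) ->
  (fine (\prod_(i <- r) e i) <= \prod_(i <- r) fine (e i))%R.
Proof.
move=> e_ge0; suff [] : 0 <= \prod_(i <- r) e i /\
    (fine (\prod_(i <- r) e i) <= \prod_(i <- r) fine (e i))%R by [].
apply: (big_ind2 (fun (a : \bar R) (x : R) => 0 <= a /\ (fine a <= x)%R)) => //.
move=> a x b y [a_ge0 a_le] [b_ge0 b_le]; split; first exact: mule_ge0.
apply: le_trans (fineM_le a_ge0 b_ge0) _.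
by apply: ler_pM => //; exact: fine_ge0.
Qed.

End FineProduct.

Lemma prodr_card_preimage (R : comPzSemiRingType) (J : finType) (n : nat)
    (u : 'I_n -> J) (F : J -> R) :
  \prod_(t < n) F (u t) = \prod_(l : J) F l ^+ #|[pred t | u t == l]|.
Proof.
rewrite (partition_big u xpredT) //=; apply: eq_bigr => l _.
rewrite -prodr_const; apply: eq_big => [t|t /eqP -> //].
by rewrite inE.
Qed.

Section GaussianChannel.
Variables (R : realType) (s2 : R).
Hypothesis s2_gt0 : 0 < s2.

Lemma fYX_ge0 (y x : cplx R) : 0 <= fYX s2 y x.
Proof. by rewrite mulr_ge0 ?expR_ge0 // invr_ge0 mulr_ge0 ?pi_ge0 ?ltW. Qed.

Lemma measurable_fYX (x : cplx R) : measurable_fun setT (fYX s2 ^~ x).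
Proof.
apply: measurable_funM; first exact: measurable_cst.
apply: measurableT_comp; first exact: measurable_expR.
apply: measurable_funM; last exact: measurable_cst.
apply: measurable_funN; apply: measurable_funD; apply: measurable_funX;
  apply: measurable_funB; do ?exact: measurable_cst.
- exact: measurable_fst.
- exact: measurable_snd.
Qed.

Lemma intC_indic (A : set (cplx R)) (x : cplx R) :
  intC s2 A x = (\int[@muC R]_y (\1_A y * fYX s2 y x)%:E)%E.
Proof.
rewrite /intC integral_mkcond; apply: eq_integral => y _.
by rewrite patchE indicE; case: (y \in A); rewrite /= ?mul1r ?mul0r.
Qed.

Lemma intCn_prod (n : nat) (h : 'I_n -> cplx R -> R) (k : \bar R) :
  (forall t y, 0 <= h t y) -> (forall t, measurable_fun setT (h t)) ->
  (0 <= k)%E ->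
  intCn n (fun y => k * (\prod_(t < n) h t (y t))%:E)%E =
  (k * \prod_(t < n) \int[@muC R]_y (h t y)%:E)%E.
Proof.
elim: n h k => [|n IHn] h k h_ge0 h_meas k_ge0 /=; first by rewrite !big_ord0.
under eq_integral => y _.
  have ky_ge0 : (0 <= k * (h ord0 y)%:E)%E by rewrite mule_ge0 ?lee_fin.
  under eq_fun => z do rewrite big_ord_recl /= EFinM muleA.
  rewrite (IHn (fun t => h (lift ord0 t))) // muleAC muleC.
  over.
rewrite ge0_integralZr //=.
- by rewrite big_ord_recl muleCA.
- exact/measurable_EFinP.
- by move=> y _; rewrite lee_fin.
- by rewrite mule_ge0 // prode_ge0 // => t _; apply: integral_ge0 => y _;
    rewrite lee_fin.
Qed.

Lemma indic_box (n : nat) (A : 'I_n -> set (cplx R)) (y : nat -> cplx R) :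
  \1_[set y : nat -> cplx R | forall t : 'I_n, A t (y t)] y =
  \prod_(t < n) \1_(A t) (y t) :> R.
Proof.
have [yA|yNA] := pselect (forall t, A t (y t)).
  by rewrite indicE mem_set // big1 // => t _; rewrite indicE mem_set.
have [t ytNA] : exists t, ~ A t (y t) by apply/existsNP.
by rewrite indicE memNset // (bigD1 t) //= indicE memNset // mul0r.
Qed.

Lemma probn_box_le (n : nat) (x : 'I_n -> cplx R) (A : 'I_n -> set (cplx R)) :
  (forall t, measurable (A t)) ->
  probn s2 x [set y : nat -> cplx R | forall t : 'I_n, A t (y t)] <=
  \prod_(t < n) fine (intC s2 (A t) (x t)).
Proof.
move=> A_meas; rewrite /probn.
under eq_fun => y do rewrite indic_box /fYXn -big_split /= -[EFin _]mul1e.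
rewrite (intCn_prod (h := fun t w => \1_(A t) w * fYX s2 w (x t))) //.
- rewrite mul1e; apply: le_trans; first apply: fine_prod_le.
    by move=> t; apply: integral_ge0 => y _; rewrite lee_fin mulr_ge0 ?fYX_ge0.
  by under eq_bigr => t _ do rewrite -intC_indic.
- by move=> t y; rewrite mulr_ge0 ?fYX_ge0.
- by move=> t; apply: measurable_funM; [exact: measurable_indic|exact: measurable_fYX].
Qed.

Lemma one_sub_le_gamma (L n M : nat) (xs : 'I_L -> cplx R)
    (u : 'I_M -> 'I_n -> 'I_L) (D : 'I_M -> 'I_n -> set (cplx R)) (X : R) :
  (0 < M)%N ->
  (forall i, probn s2 (codeword xs u i) (dec_set D i) <= X) ->
  1 - X <= gamma s2 xs u D.
Proof.
move=> M_gt0 probn_le; rewrite /gamma.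
have M_neq0 : M%:R != 0 :> R by rewrite pnatr_eq0 -lt0n.
rewrite -[1 - X](mulKf M_neq0) ler_wpM2l ?invr_ge0 ?ler0n //.
have -> : M%:R * (1 - X) = \sum_(i < M) (1 - X) by rewrite sumr_const card_ord mulr_natl.
by apply: ler_sum => i _; rewrite lerD2l lerN2.
Qed.

End GaussianChannel.

Lemma prod_typeX_entropy (R : realType) (L n : nat) (Q : 'I_L -> R) (S : R)
    (c : 'I_L -> nat) :
  (forall l, 0 <= Q l) -> \sum_(l < L) Q l = 1 -> 0 < S ->
  (forall l, (c l)%:R = n%:R * Q l) ->
  \prod_(l < L) (Q l * S) ^+ c l = expR (- n%:R * entropy Q + n%:R * ln S).
Proof.
move=> Q_ge0 Q_sum1 S_gt0 cE.
have -> : n%:R * ln S = \sum_(l < L) n%:R * (Q l * ln S).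
  by rewrite -mulr_sumr -mulr_suml Q_sum1 mul1r.
rewrite /entropy mulNr mulrN opprK mulr_sumr -big_split expR_sum.
apply: eq_bigr => l _.
have [Ql0|Ql_neq0] := eqVneq (Q l) 0.
  have -> : c l = 0%N by apply/eqP; rewrite -(eqr_nat R) cE Ql0 mulr0.
  by rewrite /= Ql0 !mul0r !mulr0 addr0 expR0 expr0.
have Ql_gt0 : 0 < Q l by rewrite lt_def Ql_neq0 Q_ge0.
rewrite /= -!mulrDr -lnM // mulrA -cE mulr_natl.
by rewrite -lnXn ?mulr_gt0 // lnK // posrE exprn_gt0 ?mulr_gt0.
Qed.

Theorem corollary3 (R : realType) (n M L : nat) (xs : 'I_L -> cplx R)
  (P s2 : R) (g : cplx R -> \bar R) (eps B delta : R)
  (u : 'I_M -> 'I_n -> 'I_L) (D : 'I_M -> 'I_n -> set (cplx R))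
  (E : 'I_L -> set (cplx R)) :
  (1 <= n)%N -> (1 <= M)%N ->
  injective xs ->
  0 < s2 -> 0 < P ->
  measurable_fun setT g -> (forall z, (0 <= g z)%E) ->
  0 < eps ->
  is_code_eps_B_delta P s2 eps g B delta xs u D ->
  E_spec s2 xs D E ->
  homogeneous u D E ->
  let p := fun l : 'I_L => fine (intC s2 (E l) (xs l)) in
  let S := \sum_(j < L) p j in
  0 < S ->
  let Q := fun l : 'I_L => p l / S in
  (forall l, code_type R u l = Q l) ->
  1 - expR (- n%:R * entropy Q + n%:R * ln S) <= eps.
Proof.
move=> n_gt0 M_gt0 _ s2_gt0 _ _ _ _ [[[_ D_meas _ _] gamma_lt] _] _
  [ctypeE DE] p S S_gt0 Q QE.
have p_ge0 l : 0 <= p l.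
  by apply/fine_ge0/integral_ge0 => y _; rewrite lee_fin fYX_ge0.
have pE l : p l = Q l * S by rewrite divfK ?gt_eqF.
have Q_ge0 l : 0 <= Q l by exact: divr_ge0 (p_ge0 l) (ltW S_gt0).
have Q_sum1 : \sum_(l < L) Q l = 1 by rewrite -mulr_suml divff ?gt_eqF.
have countE i l : #|[pred t | u i t == l]|%:R = n%:R * Q l :> R.
  by rewrite -QE -(ctypeE i l) mulrC divfK // pnatr_eq0 -lt0n.
apply/ltW/le_lt_trans/gamma_lt; apply: one_sub_le_gamma => // i.
apply: le_trans (probn_box_le s2_gt0 _ (D_meas i)) _.
under eq_bigr => t _ do rewrite DE -/(p (u i t)) pE.
rewrite (prodr_card_preimage (u i) (fun l => Q l * S)).
by rewrite (prod_typeX_entropy Q_ge0 Q_sum1 S_gt0 (countE i)).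
Qed.
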